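(* Let $B$ be a non-abelian group, $H$ a finitely generated infinite group with fixed finite generating set $X=\{x_1,\dots,x_n\}$, $W=B\wr H$, and fix $a,b\in B$ with $ab\ne ba$. For $S\subseteq H$ define $\bar a,\bar b_S\in B^H$ by $\bar a(1)=a$, $\bar a(x)=1$ for $x\neq1$, and $\bar b_S(x)=b$ for $x\in S$, $\bar b_S(x)=1$ for $x\notin S$; let $G_S\le W$ be generated by $H,\bar a,\bar b_S$ and $Y_S=(x_1,\dots,x_n,\bar a,\bar b_S)$. Let $\xi:2^H\to\mathcal G$, $\xi(S)=(G_S,Y_S)$. Then the restriction of $\xi$ to the subspace $D_R(H)$ of $2^H$ is continuous.
   Context: $B^H$ is the group of all functions $H\to B$ with pointwise multiplication; $B\wr H=B^H\rtimes H$ with $(hfh^{-1})(x)=f(h^{-1}x)$. $2^H$ is the space of all subsets of $H$ with the product topology; $D_R(H)$ is the set of $S\subseteq H$ whose orbit $\{Sh:h\in H\}$ under right multiplication is dense in $2^H$. Space of marked groups: for $m\in\mathbb N$, $\mathcal G_m$ is the set of pairs $(G,A)$, $G$ a group and $A=(a_1,\dots,a_m)$ an ordered generating tuple, modulo $(G,(a_i))\approx(G',(a'_i))$ iff $a_i\mapsto a'_i$ extends to an isomorphism. $(G,A)\approx_r(G',A')$ means there is a labeled directed graph isomorphism between the radius-$r$ balls about the identity in the Cayley graphs, sending $a_i$-edges to $a'_i$-edges. The topology on $\mathcal G_m$ has basis $\{(G',A')\in\mathcal G_m:(G',A')\approx_r(G,A)\}$, $r\in\mathbb N$; $\mathcal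 G_m\subseteq\mathcal G_{m+1}$ via $(G,(a_1,\dots,a_m))\mapsto(G,(a_1,\dots,a_m,1))$, and $\mathcal G=\bigcup_m\mathcal G_m$ carries the union topology. *)

From HB Require Import structures.
From mathcomp Require Import all_boot.
Set Implicit Arguments.
Unset Strict Implicit.
Unset Printing Implicit Defensive.
Local Open Scope group_scope.

Definition evalw {T : Type} (mul : T -> T -> T) (one : T) (inv : T -> T)
  (Y : seq T) (w : seq (nat * bool)) : T :=
  foldr (fun p acc => mul (if p.2 then nth one Y p.1 else inv (nth one Y p.1)) acc)
        one w.

Definition valid_word {T : Type} (Y : seq T) (w : seq (nat * bool)) : bool :=
  all (fun p => p.1 < size Y)%N w.

Definition generates (G : groupType) (Y : seq G) : Prop :=
  forall g : G, exists w, valid_word Y w /\ g = evalw (@mul G) 1 (@inv G) Y w.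

Section Wreath.
Variables (B H : groupType).

(* B wr H = B^H x| H, with (h f h^-1)(x) = f(h^-1 x) *)
Definition W : Type := ((H -> B) * H)%type.
Definition act (h : H) (f : H -> B) : H -> B := fun x => f (h^-1 * x).
Definition Wmul (u v : W) : W :=
  (fun x => u.1 x * act u.2 v.1 x, u.2 * v.2).
Definition Wone : W := (fun _ => 1, 1).
Definition Winv (u : W) : W := (act (u.2)^-1 (fun x => (u.1 x)^-1), (u.2)^-1).
Definition Hin (h : H) : W := (fun _ => 1, h).
Definition Bfun (f : H -> B) : W := (f, 1).

Definition Weval (Y : seq W) (w : seq (nat * bool)) : W := evalw Wmul Wone Winv Y w.

Definition ball (Y : seq W) (r : nat) (g : W) : Prop :=
  exists w, (size w <= r)%N /\ valid_word Y w /\ g = Weval Y w.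

Definition gen (Y : seq W) (g : W) : Prop :=
  exists w, valid_word Y w /\ g = Weval Y w.

(* (<Y>, Y) ~_r (<Y'>, Y'): the marked groups lie in the same G_m (same
   number of generators) and there is an isomorphism of labelled directed
   graphs between the radius-r balls about the identity of their Cayley
   graphs (edge g -i-> g*Y_i), sending identity to identity and
   i-edges to i-edges. *)
Definition ball_equiv (Y Y' : seq W) (r : nat) : Prop :=
  size Y = size Y' /\
  exists phi : W -> W,
    phi Wone = Wone /\
    (forall g, ball Y r g -> ball Y' r (phi g)) /\
    (forall g g', ball Y r g -> ball Y r g' -> phi g = phi g' -> g = g') /\
    (forall g', ball Y' r g' -> exists g, ball Y r g /\ phi g = g') /\
    (forall u v i, ball Y r u -> ball Y r v -> (i < size Y)%N ->
       (v = Wmul u (nth Wone Y i) <-> phi v = Wmul (phi u) (nth Wone Y' i))).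

(* subsets of H are elements of 2^H = H -> bool *)
Definition abar (a : B) : H -> B := fun x => if x == 1 then a else 1.
Definition bbar (b : B) (S : H -> bool) : H -> B := fun x => if S x then b else 1.

(* Y_S = (x_1, ..., x_n, abar, bbar_S);  xi(S) = (G_S, Y_S) with G_S = gen Y_S *)
Definition YS (xs : seq H) (a b : B) (S : H -> bool) : seq W :=
  map Hin xs ++ [:: Bfun (abar a); Bfun (bbar b S)].

Definition rtrans (S : H -> bool) (h : H) : H -> bool := fun y => S (y * h^-1).

(* D_R(H): the orbit {S h} is dense in 2^H (product topology): every basic
   open set, given by a finite F and a pattern T on F, meets the orbit. *)
Definition DR (S : H -> bool) : Prop :=
  forall (F : seq H) (T : H -> bool), exists h : H,
    forall y, y \in F -> rtrans S h y = T y.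

End Wreath.

(* An element of G_S spelled by a word of length at most L has an H-part that
   does not depend on S, and a B-part whose value at x only depends on S and on
   the indicator of 1 along K x, for a finite K = [window L] depending only on L.
   So if T agrees with S on K K^-1, a relation between two short words in G_T
   also holds in G_S: at points x with 1 in K x, K x lies inside K K^-1; at the
   other points, density of the orbit of T gives h outside K such that T looks
   along K h^-1 as S looks along K x, so the coordinates at x for S are those
   at h^-1 for T.  As the same holds with S and T exchanged, the two Cayley
   graphs have the same relations of length at most r + 1, hence isomorphic
   r-balls. *)
From HB Require Import structures.
From mathcomp Require Import all_boot.
From Stdlib Require Import FunctionalExtensionality ClassicalEpsilon.
Set Implicit Arguments.
Unset Strict Implicit.
Unset Printing Implicit Defensive.
Local Open Scope group_scope.

Section WreathProduct.
Variables B H : groupType.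
Implicit Types (u v z : W B H) (Y : seq (W B H)) (w : seq (nat * bool)).

Lemma W_ext u v : u.1 =1 v.1 -> u.2 = v.2 -> u = v.
Proof.
by case: u v => [f h] [f' h'] /= /functional_extensionality -> ->.
Qed.

Lemma mulWA : associative (@Wmul B H).
Proof.
move=> u v z; apply: W_ext => [x|] /=; last by rewrite mulgA.
by rewrite /act /= mulgA invgM mulgA.
Qed.

Lemma mul1W : left_id (Wone B H) (@Wmul B H).
Proof. by move=> u; apply: W_ext => [x|] /=; rewrite /act ?invg1 !mul1g. Qed.

Lemma mulW1 : right_id (Wone B H) (@Wmul B H).
Proof. by move=> u; apply: W_ext => [x|] /=; rewrite /act mulg1. Qed.

Definition letter Y (p : nat * bool) : W B H :=
  if p.2 then nth (Wone B H) Y p.1 else Winv (nth (Wone B H) Y p.1).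

Lemma Weval_cons Y p w : Weval Y (p :: w) = Wmul (letter Y p) (Weval Y w).
Proof. by []. Qed.

Lemma Weval_rcons Y w p : Weval Y (rcons w p) = Wmul (Weval Y w) (letter Y p).
Proof.
elim: w => [|q w IH]; first by rewrite Weval_cons mul1W mulW1.
by rewrite rcons_cons !Weval_cons IH mulWA.
Qed.

Lemma ball_equiv_of_words Y Y' r :
  size Y = size Y' ->
  (forall w1 w2, valid_word Y w1 -> valid_word Y w2 ->
     size w1 <= r.+1 -> size w2 <= r.+1 ->
     Weval Y w1 = Weval Y w2 <-> Weval Y' w1 = Weval Y' w2) ->
  ball_equiv Y Y' r.
Proof.
move=> sizeY words; split=> //.
have validY w : valid_word Y w = valid_word Y' w by rewrite /valid_word sizeY.
pose spells g w := size w <= r /\ valid_word Y w /\ g = Weval Y w.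
pose word g := epsilon (inhabits [::]) (spells g).
have wordP g : ball Y r g -> spells g (word g) by apply: epsilon_spec.
have same_image w1 w2 : spells (Weval Y w2) w1 -> size w2 <= r ->
    valid_word Y w2 -> Weval Y' w1 = Weval Y' w2.
  by case=> s1 [v1 e1] s2 v2; apply/(words _ _ v1 v2 (leqW s1) (leqW s2)).
exists (fun g => Weval Y' (word g)); split.
  have b1 : ball Y r (Wone B H) by exists [::].
  exact: (same_image _ [::] (wordP _ b1)).
split.
  by move=> g /wordP [s [v _]]; exists (word g); rewrite -validY.
split.
  move=> g g' /wordP [s [v eg]] /wordP [s' [v' eg']] e.
  by rewrite eg eg'; apply/(words _ _ v v' (leqW s) (leqW s')).
split.
  move=> g' [w [s [v ->]]]; rewrite -validY in v.
  have bw : ball Y r (Weval Y w) by exists w.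
  by exists (Weval Y w); split; last by apply: same_image (wordP _ bw) s v.
move=> g g' i /wordP [s [v eg]] /wordP [s' [v' eg']] lti.
have vi : valid_word Y (rcons (word g) (i, true)).
  by rewrite /valid_word all_rcons lti.
rewrite {1}eg' {1}eg -!(Weval_rcons _ _ (i, true)).
by apply: words; rewrite ?size_rcons // leqW.
Qed.

End WreathProduct.

Section DenseOrbits.
Variable H : groupType.
Hypothesis H_infinite : forall s : seq H, exists h : H, h \notin s.

Lemma DR_translate_notin (S : H -> bool) : DR S ->
  forall (K F : seq H) (T : H -> bool),
  exists2 h, h \notin K & forall y, y \in F -> rtrans S h y = T y.
Proof.
move=> DRS; elim=> [|k K IH] F T; first by have [h] := DRS F T; exists h.
have [q qF] := H_infinite F.
(* prescribing at a fresh point q the value opposite to S (q * k^-1) rules out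
   h = k *)
have [h hK ShT] := IH (q :: F) (fun y => if y == q then ~~ S (q * k^-1) else T y).
exists h.
  rewrite inE negb_or hK andbT; apply/eqP => ehk.
  by have := ShT q (mem_head _ _); rewrite ehk eqxx /rtrans; case: (S _).
move=> y yF; rewrite ShT ?inE ?yF ?orbT //.
by case: eqP yF => // ->; rewrite (negPf qF).
Qed.

End DenseOrbits.

Section GeneratorsYS.
Variables (B H : groupType) (xs : seq H) (a b : B).
Implicit Types (S T : H -> bool) (w : seq (nat * bool)).

Definition hletter (p : nat * bool) : H :=
  if p.2 then nth 1 xs p.1 else (nth 1 xs p.1)^-1.

Lemma size_YS S : size (YS xs a b S) = (size xs).+2.
Proof. by rewrite size_cat size_map addn2. Qed.

Lemma nth_YS S i : nth (Wone B H) (YS xs a b S) i =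
  if i < size xs then Hin B (nth 1 xs i)
  else nth (Wone B H) [:: Bfun (abar a); Bfun (bbar b S)] (i - size xs).
Proof.
by rewrite nth_cat size_map; case: ltnP => // lti; rewrite (nth_map 1).
Qed.

Lemma letter_YS_snd S p : (letter (YS xs a b S) p).2 = hletter p.
Proof.
case: p => i c; rewrite /letter /hletter nth_YS /=.
case: ltnP => [|lei]; first by case: c.
rewrite (nth_default 1 lei).
by case: c; case: (i - _) => [|[|k]]; rewrite /= ?nth_nil.
Qed.

Lemma letter_YS_fst S S' p x x' : S x = S' x' -> (x == 1) = (x' == 1) ->
  (letter (YS xs a b S) p).1 x = (letter (YS xs a b S') p).1 x'.
Proof.
move=> eS e1; case: p => i c; rewrite /letter !nth_YS.
case: ltnP => _; first by case: c.
case: c; case: (i - _) => [|[|k]];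
  by rewrite /= ?nth_nil /act /abar /bbar /= ?invgK ?mul1g ?eS ?e1.
Qed.

Lemma Weval_YS_snd S S' w :
  (Weval (YS xs a b S) w).2 = (Weval (YS xs a b S') w).2.
Proof. by elim: w => [|p w IH] //; rewrite !Weval_cons /= IH !letter_YS_snd. Qed.

Definition hletters : seq H := 1 :: xs ++ map inv xs.

Lemma mem_hletters p : hletter p \in hletters.
Proof.
rewrite /hletter inE mem_cat; case: (ltnP p.1 (size xs)) => [lti|lei].
  by case: p.2; rewrite ?map_f ?mem_nth ?orbT.
by rewrite nth_default // invg1 if_same eqxx.
Qed.

(* [window L] contains the inverses of the H-parts of all prefixes of words of
   length at most L. *)
Fixpoint window (L : nat) : seq H :=
  if L is L'.+1 then 1 :: [seq q * k^-1 | q <- window L', k <- hletters]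
  else [:: 1].

Lemma window1 L : 1 \in window L.
Proof. by case: L => [|L]; rewrite inE eqxx. Qed.

Lemma window_step L q p : q \in window L -> q * (hletter p)^-1 \in window L.+1.
Proof.
move=> qL; rewrite inE; apply/orP; right.
by apply/allpairsPdep; exists q, (hletter p); rewrite mem_hletters.
Qed.

Definition same_view L S x S' x' : Prop :=
  forall q, q \in window L ->
    S (q * x) = S' (q * x') /\ (q * x == 1) = (q * x' == 1).

Lemma Weval_YS_fst_same_view L S S' x x' w :
  size w <= L -> same_view L S x S' x' ->
  (Weval (YS xs a b S) w).1 x = (Weval (YS xs a b S') w).1 x'.
Proof.
elim: w L x x' => [|p w IH] [|L] x x' // lew sv.
rewrite !Weval_cons /= /act !letter_YS_snd.
have [eS e1] := sv 1 (window1 _); rewrite !mul1g in eS e1.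
rewrite (letter_YS_fst p eS e1); congr (_ * _); apply: (IH L) => // q qL.
by rewrite !mulgA; apply: sv; apply: window_step.
Qed.

Definition window_div L : seq H := [seq q * p^-1 | q <- window L, p <- window L].

Hypothesis H_infinite : forall s : seq H, exists h : H, h \notin s.

Lemma Weval_YS_eq_transfer L S T : DR T ->
  (forall y, y \in window_div L -> T y = S y) ->
  forall w1 w2, size w1 <= L -> size w2 <= L ->
  Weval (YS xs a b T) w1 = Weval (YS xs a b T) w2 ->
  Weval (YS xs a b S) w1 = Weval (YS xs a b S) w2.
Proof.
move=> DRT agree w1 w2 le1 le2 eT; apply: W_ext => [x|]; last first.
  by rewrite (Weval_YS_snd S T w1) (Weval_YS_snd S T w2) eT.
suff [x' sv] : exists x', same_view L S x T x'.
  by rewrite (Weval_YS_fst_same_view le1 sv) (Weval_YS_fst_same_view le2 sv) eT.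
have [[p pL /mulg1_eq px]|no1] := classic (exists2 p, p \in window L & p * x = 1).
  exists x => q qL; split=> //; rewrite agree //.
  by apply/allpairsPdep; exists q, p; rewrite -px.
have [h hL ThS] :=
  DR_translate_notin H_infinite DRT (window L) (window L) (fun q => S (q * x)).
exists h^-1 => q qL; split; first by rewrite -ThS.
have -> : (q * x == 1) = false by apply/eqP => qx; apply: no1; exists q.
by symmetry; apply/eqP => /divg1_eq qh; rewrite -qh qL in hL.
Qed.

Lemma Weval_YS_eq_iff L S T : DR S -> DR T ->
  (forall y, y \in window_div L -> T y = S y) ->
  forall w1 w2, size w1 <= L -> size w2 <= L ->
  Weval (YS xs a b T) w1 = Weval (YS xs a b T) w2 <->
  Weval (YS xs a b S) w1 = Weval (YS xs a b S) w2.
Proof.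
move=> DRS DRT agree w1 w2 le1 le2.
have agree' y : y \in window_div L -> S y = T y by move/agree.
split; first exact: (Weval_YS_eq_transfer DRT agree le1 le2).
exact: (Weval_YS_eq_transfer DRS agree' le1 le2).
Qed.

End GeneratorsYS.

Theorem corollary3p6 (B H : groupType) (xs : seq H) (a b : B)
  (hab : a * b != b * a)
  (Hinf : forall s : seq H, exists h : H, h \notin s)
  (Hgen : generates xs) :
  forall S : H -> bool, DR S ->
  forall r : nat, exists F : seq H,
    forall T : H -> bool, DR T ->
      (forall y, y \in F -> T y = S y) ->
      ball_equiv (YS xs a b T) (YS xs a b S) r.
Proof.
move=> S DRS r; exists (window_div xs r.+1) => T DRT agree.
apply: ball_equiv_of_words; first by rewrite !size_YS.
by move=> w1 w2 _ _; apply: Weval_YS_eq_iff.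
Qed.
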